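(* Let $k\ge 2$ and $0<\lambda\le\frac{1}{3k}$, and consider the common-chunk-protocol Markov process with $L_1(\mathbf{x})=\sum_{i=1}^k \bar S_i$. Then there exists $\epsilon>0$ such that $\Delta L_1(\mathbf{x})<-\epsilon$ for every state $\mathbf{x}$ with $S>3k^3$.
   Context: Model: Fix an integer $k\ge 2$ (number of chunks of a file) and $\lambda>0$. There is always exactly one seed holding all $k$ chunks. Non-seed peers arrive according to a Poisson process of rate $\lambda$, each arriving with no chunks; each non-seed peer holds a subset (its profile) of $\{1,\dots,k\}$ and leaves the system immediately once it holds all $k$ chunks. The state $\mathbf{x}$ of the continuous-time Markov process is the number of non-seed peers with each profile. $S$ denotes the total number of peers present, including the seed. Each non-seed peer has an independent rate-1 Poisson clock; at each tick it draws a sample of peers independently and uniformly at random with replacement from the current $S$ peers (seed and itself included) and may instantaneously download at most one chunk that it lacks and that is held by some sampled peer (such a chunk is a ''match''). Counting draws with multiplicity, a chunk is ''rare'' in a sample of 3 draws if exactly one of the 3 draws holds it. Common chunk protocol: (i) a peer with no chunks draws 3 peers and downloads a chunk chosen uniformly among the rare matches, if there is any, otherwise nothing; (ii) a peer holding at least 1 and at most $k-2$ chunks draws 1 peer and downloads a uniformly chosen match, if any, otherwise nothing; (iii) a peer holding exactly $k-1$ chunks draws 3 peers and downloads its missing chunk only if that chunk is held by some draw and every chunk it holds is held by at least 2 of the 3 draws; otherwise nothing. Notation: $S_i$ ($1\le i\le k$) is the number of peers, including the seed, holding chunk $i$; $\bar S_i=S-S_i$. For a function $f$ on the state space, with $q(\mathbf{x},\mathbf{x}')$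 the transition rates of the Markov process, the drift is $\Delta f(\mathbf{x})=\sum_{\mathbf{x}'\neq\mathbf{x}} q(\mathbf{x},\mathbf{x}')\,(f(\mathbf{x}')-f(\mathbf{x}))$. *)

From HB Require Import structures.
From mathcomp Require Import all_boot all_order all_algebra.
Set Implicit Arguments. Unset Strict Implicit. Unset Printing Implicit Defensive.
Import Order.TTheory GRing.Theory Num.Theory.

(* Chunks are 'I_k (chunk i+1 of the paper is ordinal i).  A profile is a
   {set 'I_k}.  A state records, for every profile, the number of non-seed
   peers with that profile; non-seed peers never hold all chunks, so valid
   states satisfy x [set: 'I_k] = 0. *)
Definition state (k : nat) := {ffun {set 'I_k} -> nat}.

Section Model.
Variable k : nat.
Implicit Types (x : state k) (A B : {set 'I_k}) (j : 'I_k).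

(* number of peers (seed included) with profile B: the seed is the unique
   peer with full profile *)
Definition cnt x B : nat := if B == [set: 'I_k] then 1%N else x B.

Definition Stot x : nat := \sum_(B : {set 'I_k}) cnt x B.

Definition Schunk x (i : 'I_k) : nat := \sum_(B : {set 'I_k} | i \in B) cnt x B.

Definition Sbar x (i : 'I_k) : nat := Stot x - Schunk x i.

Definition mult3 (B1 B2 B3 : {set 'I_k}) (i : 'I_k) : nat :=
  ((i \in B1) + (i \in B2) + (i \in B3))%N.

Definition rare3 (B1 B2 B3 : {set 'I_k}) : {set 'I_k} :=
  [set i | mult3 B1 B2 B3 i == 1%N].

Section Rates.
Variable R : realFieldType.
Local Open Scope ring_scope.

Definition pdraw x B : R := (cnt x B)%:R / (Stot x)%:R.

Definition pdraw3 x B1 B2 B3 : R := pdraw x B1 * pdraw x B2 * pdraw x B3.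

(* Probability that, at a clock tick, a peer with profile A downloads chunk j
   under the common chunk protocol. *)
Definition pdl x A j : R :=
  if j \in A then 0 else
  if #|A| == 0%N then
    (* (i): three draws, uniform among rare matches (all chunks are lacking) *)
    \sum_(B1 : {set 'I_k}) \sum_(B2 : {set 'I_k}) \sum_(B3 : {set 'I_k})
      pdraw3 x B1 B2 B3 *
      (if j \in rare3 B1 B2 B3 then (#|rare3 B1 B2 B3|%:R)^-1 else 0)
  else if #|A| == k.-1 then
    (* (iii): three draws; get missing chunk j iff some draw holds it and
       each held chunk is held by at least 2 of the 3 draws *)
    \sum_(B1 : {set 'I_k}) \sum_(B2 : {set 'I_k}) \sum_(B3 : {set 'I_k})
      pdraw3 x B1 B2 B3 *
      (if (j \in B1 :|: B2 :|: B3) && [forall i in A, (2 <= mult3 B1 B2 B3 i)%N]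
       then 1 else 0)
  else
    (* (ii): 1 <= |A| <= k-2, one draw, uniform among matches *)
    \sum_(B : {set 'I_k}) pdraw x B *
      (if j \in B :\: A then (#|B :\: A|%:R)^-1 else 0).

End Rates.

Definition arrive x : state k :=
  [ffun B => if B == set0 then (x B).+1 else x B].

(* a peer with profile A downloads chunk j (j \notin A); it leaves if it
   then holds all chunks *)
Definition move x A j : state k :=
  [ffun B => if B == A then (x B).-1
             else if (B == j |: A) && (B != [set: 'I_k]) then (x B).+1
             else x B].

(* Drift  Delta f(x) = sum_{x' <> x} q(x,x') (f x' - f x), written as a sum
   over the possible transitions: arrivals at rate lambda, and, for each
   profile A and chunk j, downloads of j by some peer with profile A at rate
   x_A * pdl x A j (each of the x_A peers has a rate-1 clock). *)
Definition drift (R : realFieldType) (lam : R) (f : state k -> R) x : R :=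
  (lam * (f (arrive x) - f x) +
   \sum_(A : {set 'I_k}) \sum_(j : 'I_k)
      (x A)%:R * @pdl R x A j * (f (move x A j) - f x))%R.

Definition L1 (R : realFieldType) x : R := (\sum_(i : 'I_k) (Sbar x i)%:R)%R.

End Model.

From HB Require Import structures.
From mathcomp Require Import all_boot all_order all_algebra ring lra zify.
Import Order.TTheory GRing.Theory Num.Theory.
Set Implicit Arguments. Unset Strict Implicit. Unset Printing Implicit Defensive.

(* L_1 counts, over all non-seed peers, the chunks they still lack: an arrival
   raises it by k and every download lowers it by 1.  Hence
     Delta L_1 (x) = lambda k - D(x),
   where D(x) is the total download rate; since lambda k <= 1/3 it suffices
   to prove D(x) >= 9/20 when S > 3k^3, and eps = 1/10 works.

   To bound D we sort the non-seed peers into the n0 empty ones, the nm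
   "intermediate" ones (1 <= |A| <= k-2) and the n3 "one-short" ones
   (|A| = k-1), and single out a largest one-short class A* = [set~ j*] of
   size M >= n3/k.  Per peer:
   - an empty peer downloads whenever exactly one of its three draws is
     non-empty (that draw's chunks are then all rare): rate >= 3a^2(1-a),
     a = n0/S;
   - an intermediate peer downloads whenever its draw is the seed: >= 1/S;
   - a peer of profile A* gets j* whenever two draws are of profile A* and
     the third holds j*, e.g. the seed or another one-short peer:
     rate >= 3 (M/S)^2 (1 + n3 - M)/S.
   A real inequality, using S = 1 + n0 + nm + n3 and n3 <= kM, finishes. *)

Section RealInequalities.
Local Open Scope ring_scope.
Variable R : realFieldType.

(* Empty peers, with a = n0/S: their total rate 3 a^3 S (1-a) is at least
   a - 1/10 as soon as S >= 25 and some peer (the seed) is non-empty. *)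
Lemma empty_rate_lb (a S : R) : 0 <= a -> 25 <= S -> 1 <= S * (1 - a) ->
  a - 1/10 <= 3 * a ^+ 3 * (S * (1 - a)).
Proof.
move=> ha hS h1.
have a3 : 0 <= a ^+ 3 by rewrite exprn_ge0.
have [h|h] := lerP (3/5) a.
  have : a <= 3 * a ^+ 3.
    have h2 : 0 <= a * (a - 3/5) by rewrite mulr_ge0 // subr_ge0.
    have h3 : 0 <= a * (a * (a - 3/5)) by rewrite mulr_ge0.
    have -> : a ^+ 3 = a * (a * a) by rewrite !exprS expr0 mulr1.
    nra.
  have : 0 <= 3 * a ^+ 3 * (S * (1 - a) - 1) by rewrite mulr_ge0 ?subr_ge0 // mulr_ge0.
  lra.
have h10 : 10 <= S * (1 - a).
  have : 0 <= (S - 25) * (1 - a) by rewrite mulr_ge0 ?subr_ge0 //; lra.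
  lra.
have : a - 1/10 <= 30 * a ^+ 3.
  have := sqr_ge0 (a - 1/10). nra.
have : 0 <= 3 * a ^+ 3 * (S * (1 - a) - 10) by rewrite mulr_ge0 ?subr_ge0 // mulr_ge0.
lra.
Qed.

(* A quartic estimate used when the largest one-short class dominates:
   (m + s)^4 <= m^3 (1 + 25 s) for 0 <= s <= m <= 1. *)
Lemma quartic_le (m s : R) : 0 <= s -> s <= m -> m <= 1 ->
  (m + s) ^+ 4 <= m ^+ 3 * (1 + 25 * s).
Proof.
move=> hs hsm hm.
have h0 : 0 <= m by lra.
have ms : 0 <= m - s by lra.
have p1 : 0 <= m * m * s * (m - s) by rewrite !mulr_ge0.
have p2 : 0 <= m * s * (m * m - s * s).
  by rewrite !mulr_ge0 // subr_ge0; apply: ler_pM.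
have p3 : 0 <= s * (m * m * m - s * s * s).
  rewrite mulr_ge0 // subr_ge0; apply: ler_pM; rewrite ?mulr_ge0 //.
  exact: ler_pM.
have p4 : 0 <= m * m * m * (1 - m) by rewrite !mulr_ge0 // subr_ge0.
have p5 : 0 <= m * m * m * s by rewrite !mulr_ge0.
have -> : (m + s) ^+ 4 = m * m * m * m + 4 * (m * m * m) * s
    + 6 * (m * m) * (s * s) + 4 * m * (s * s * s) + s * s * s * s by ring.
have -> : m ^+ 3 = m * m * m by ring.
nra.
Qed.

(* One-short peers, with m = M/S the largest class and c = n3/S all of them
   (c <= kk m): their total rate 3 m^3 (1 + S (c - m)) is at least c - 2/5
   once S >= 3 kk^3 and S >= 25. *)
Lemma oneshort_rate_lb (m c S kk : R) : 0 <= m -> m <= c -> c <= 1 ->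
  c <= kk * m -> 0 < kk -> 3 * kk ^+ 3 <= S -> 25 <= S ->
  c - 2/5 <= 3 * m ^+ 3 * (1 + S * (c - m)).
Proof.
move=> hm hmc hc hck hk hS hS25.
have c0 : 0 <= c by lra.
have m3 : 0 <= m ^+ 3 by rewrite exprn_ge0.
have [h|h] := lerP m (c / 2).
  have hcm : c / 2 <= c - m by lra.
  have k3 : c ^+ 3 <= kk ^+ 3 * m ^+ 3.
    by rewrite -exprMn; apply: lerXn2r; rewrite ?nnegrE //; nra.
  have Sm : 3 * c ^+ 3 <= S * m ^+ 3.
    have : 0 <= (S - 3 * kk ^+ 3) * m ^+ 3 by rewrite mulr_ge0 // subr_ge0.
    nra.
  have : 3 * (S * m ^+ 3) * (c / 2) <= 3 * m ^+ 3 * (1 + S * (c - m)).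
    have : 0 <= S * m ^+ 3 * (c - m - c / 2) by rewrite !mulr_ge0 ?subr_ge0 //; lra.
    nra.
  have : 3 * (3 * c ^+ 3) * (c / 2) <= 3 * (S * m ^+ 3) * (c / 2).
    by rewrite ler_wpM2r ?ler_wpM2l //; lra.
  have : c - 2/5 <= 9/2 * c ^+ 4.
    have h1 := sqr_ge0 (c ^+ 2 - 1/7).
    have h2 := sqr_ge0 (c - 7/18).
    have -> : c ^+ 4 = (c ^+ 2) ^+ 2 by rewrite -exprM.
    nra.
  have -> : c ^+ 4 = c ^+ 3 * c by rewrite exprSr.
  lra.
have hq := @quartic_le m (c - m) ltac:(lra) ltac:(lra) ltac:(lra).
rewrite addrC subrK in hq.
have : 0 <= m ^+ 3 * ((S - 25) * (c - m)) by rewrite !mulr_ge0 ?subr_ge0 //; lra.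
have : c - 2/5 <= 3 * c ^+ 4.
  have h1 := sqr_ge0 (c ^+ 2 - 1/5).
  have h2 := sqr_ge0 (c - 5/12).
  have -> : c ^+ 4 = (c ^+ 2) ^+ 2 by rewrite -exprM.
  nra.
nra.
Qed.

(* The final real inequality: S = 1 + n0 + nm + M + r peers, M the largest
   one-short class, r the other one-short peers (M + r <= kk M), and the
   lower bounds of the three kinds of peers add up to at least 9/20. *)
Lemma download_rate_numeric_lb (S n0 nm M r kk : R) :
  2 <= kk -> 3 * kk ^+ 3 + 1 <= S ->
  0 <= n0 -> 0 <= nm -> 0 <= M -> 0 <= r -> M + r <= kk * M ->
  S = 1 + n0 + nm + M + r ->
  9/20 <= n0 * (3 * (n0 / S) ^+ 2 * (1 - n0 / S)) + nm / S +
          M * (3 * (M / S) ^+ 2 * ((1 + r) / S)).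
Proof.
move=> hk hS h0 hnm hM hr hMk hSe.
have k3 : 8 <= kk ^+ 3.
  have -> : (8 : R) = 2 ^+ 3 by rewrite -natrX.
  by apply: lerXn2r; rewrite ?nnegrE //; lra.
have S25 : 25 <= S by lra.
have Sp : 0 < S by lra.
have Sn : S != 0 by rewrite gt_eqF.
set a := n0 / S; set b := nm / S; set c := (M + r) / S; set m := M / S.
have ea : n0 = a * S by rewrite /a mulfVK.
have em : M = m * S by rewrite /m mulfVK.
have a0 : 0 <= a by rewrite /a divr_ge0 // ltW.
have m0 : 0 <= m by rewrite /m divr_ge0 // ltW.
have T1 : n0 * (3 * a ^+ 2 * (1 - a)) = 3 * a ^+ 3 * (S * (1 - a)).
  by rewrite ea; ring.
have T3 : M * (3 * m ^+ 2 * ((1 + r) / S)) = 3 * m ^+ 3 * (1 + S * (c - m)).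
  by rewrite /c em; field.
have hsum : a + b + c = 1 - 1 / S.
  have -> : 1 - 1 / S = (S - 1) / S by field.
  by rewrite /a /b /c -!mulrDl; congr (_ / _); lra.
have eS : S * (1 - a) = S - n0 by rewrite ea; field.
have H1 := @empty_rate_lb a S a0 S25 ltac:(rewrite eS; lra).
have H3 := @oneshort_rate_lb m c S kk m0
  ltac:(by rewrite /m /c ler_pM2r ?invr_gt0 //; lra)
  ltac:(by rewrite /c ler_pdivrMr // mul1r; lra)
  ltac:(by rewrite /c /m mulrA ler_pM2r ?invr_gt0) ltac:(lra) ltac:(lra) S25.
rewrite T1 -/b T3.
have : 1 / S <= 1 / 25 by rewrite ler_pdivrMr // mulrC mulrA ler_pdivlMr; lra.
lra.
Qed.

End RealInequalities.

Section LyapunovDrift.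
Local Open Scope ring_scope.
Variables (R : realFieldType) (k : nat).
Implicit Types (x : state k) (A B : {set 'I_k}).

Definition missing B : R := (#|~: B|)%:R.

Lemma Sbar_cnt x i : Sbar x i = (\sum_(B : {set 'I_k} | i \notin B) cnt x B)%N.
Proof.
by rewrite /Sbar /Stot /Schunk (bigID (fun B : {set 'I_k} => i \in B)) /= addKn.
Qed.

Lemma L1_missing x : L1 R x = \sum_B (x B)%:R * missing B.
Proof.
rewrite /L1.
under eq_bigr => i _ do rewrite Sbar_cnt natr_sum big_mkcond /=.
rewrite exchange_big /=; apply: eq_bigr => B _.
rewrite -big_mkcond /= sumr_const.
have -> : #|[pred i | i \notin B]| = #|~: B|.
  by apply: eq_card => i; rewrite !inE.
rewrite /missing /cnt; case: eqP => [->|_].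
  by rewrite setCT cards0 !mulr0n mulr0.
by rewrite mulr_natr.
Qed.

(* An arrival brings a peer missing all k chunks. *)
Lemma L1_arrive x : L1 R (arrive x) - L1 R x = k%:R.
Proof.
rewrite !L1_missing -sumrB (bigD1 set0) //= big1 ?addr0.
  rewrite /arrive ffunE eqxx /missing setC0 cardsT card_ord -mulrBl.
  by rewrite -natrB // subSnn mul1r.
move=> B /negPf HB; rewrite /arrive ffunE HB.
by rewrite -mulrBl subrr mul0r.
Qed.

(* A download moves one peer from A to j |: A, one chunk fewer missing
   (a peer completing the file leaves, with nothing missing anyway). *)
Lemma L1_move x A j : x A != 0%N -> j \notin A ->
  L1 R (move x A j) - L1 R x = -1.
Proof.
move=> hA hj.
have hne : j |: A != A.
  by apply/eqP => /setP /(_ j); rewrite !inE eqxx /= (negPf hj).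
rewrite !L1_missing -sumrB (bigD1 A) //= (bigD1 (j |: A)) //= big1 ?addr0.
  rewrite /move !ffunE eqxx (negPf hne) eqxx /=.
  have leave : (x A).-1%:R * missing A - (x A)%:R * missing A = - missing A.
    have hp : (0 < x A)%N by rewrite lt0n.
    rewrite -mulrBl -{2}(prednK hp) -addn1 natrD.
    by rewrite opprD addrA subrr add0r mulN1r.
  have enter : ((if j |: A != [set: 'I_k] then (x (j |: A)).+1 else x (j |: A))%:R *
      missing (j |: A) - (x (j |: A))%:R * missing (j |: A)) = missing (j |: A).
    case: ifP => [_|/negbFE/eqP ->].
      by rewrite -mulrBl -addn1 natrD addrAC subrr add0r mul1r.
    by rewrite subrr /missing setCT cards0.
  rewrite leave enter /missing.
  have -> : #|~: A| = (#|~: (j |: A)|).+1.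
    rewrite (cardsD1 j (~: A)) !inE hj /= add1n; congr (_.+1).
    by apply: eq_card => i; rewrite !inE negb_or.
  by rewrite -addn1 natrD opprD addrAC addNr add0r.
move=> B /andP [hB1 hB2]; rewrite /move ffunE (negPf hB1) (negPf hB2) /=.
by rewrite subrr.
Qed.

Definition download_rate x : R :=
  \sum_A \sum_(j : 'I_k) (x A)%:R * pdl R x A j.

Lemma drift_L1 lam x : drift lam (@L1 k R) x = lam * k%:R - download_rate x.
Proof.
rewrite /drift L1_arrive; congr (_ + _).
rewrite /download_rate -[RHS]sumrN; apply: eq_bigr => A _.
rewrite -[RHS]sumrN; apply: eq_bigr => j _.
have [/eqP ->|hA] := boolP (x A == 0%N); first by rewrite !mul0r oppr0.
have [hj|hj] := boolP (j \in A); first by rewrite /pdl hj mulr0 mul0r oppr0.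
by rewrite L1_move // mulrN1.
Qed.

End LyapunovDrift.

Section DrawProbabilities.
Local Open Scope ring_scope.
Variables (R : realFieldType) (k : nat).
Implicit Types (x : state k) (B C : {set 'I_k}).

(* The seed is always present. *)
Lemma Stot_gt0 x : (0 < Stot x)%N.
Proof. by rewrite /Stot (bigD1 [set: 'I_k]) //= /cnt eqxx add1n. Qed.

Lemma pdraw_ge0 x B : 0 <= pdraw R x B.
Proof. by rewrite /pdraw divr_ge0 ?ler0n. Qed.

Lemma pdraw3_ge0 x B1 B2 B3 : 0 <= pdraw3 R x B1 B2 B3.
Proof. by rewrite /pdraw3; apply: mulr_ge0; [apply: mulr_ge0|]; apply: pdraw_ge0. Qed.

Lemma sum_pdraw x : \sum_B pdraw R x B = 1.
Proof.
rewrite /pdraw -mulr_suml -natr_sum -/(Stot x) divff //.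
by rewrite pnatr_eq0 -lt0n Stot_gt0.
Qed.

Lemma sum_mul_eq (f : {set 'I_k} -> R) C : \sum_B f B * (B == C)%:R = f C.
Proof.
rewrite (bigD1 C) //= eqxx mulr1 big1 ?addr0 //.
by move=> B /negPf ->; rewrite mulr0.
Qed.

Lemma sum_pdraw_neq x C : \sum_B pdraw R x B * (B != C)%:R = 1 - pdraw R x C.
Proof.
rewrite -[X in X - _](sum_pdraw x) -[X in _ - X](sum_mul_eq (pdraw R x) C) -sumrB.
by apply: eq_bigr => B _; case: eqP => _ /=; rewrite ?mulr0 ?mulr1 ?subr0 ?subrr.
Qed.

Lemma sum3_factor (f g h : {set 'I_k} -> R) :
  \sum_B1 \sum_B2 \sum_B3 f B1 * g B2 * h B3 =
  (\sum_B f B) * (\sum_B g B) * (\sum_B h B).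
Proof.
under eq_bigr => B1 _ do under eq_bigr => B2 _ do rewrite -mulr_sumr.
under eq_bigr => B1 _ do rewrite -mulr_suml.
rewrite -mulr_suml.
under eq_bigr => B1 _ do rewrite -mulr_sumr.
by rewrite -mulr_suml.
Qed.

Lemma sum3D (F G H : {set 'I_k} -> {set 'I_k} -> {set 'I_k} -> R) :
  \sum_B1 \sum_B2 \sum_B3 (F B1 B2 B3 + G B1 B2 B3 + H B1 B2 B3) =
  \sum_B1 \sum_B2 \sum_B3 F B1 B2 B3 + \sum_B1 \sum_B2 \sum_B3 G B1 B2 B3 +
  \sum_B1 \sum_B2 \sum_B3 H B1 B2 B3.
Proof.
rewrite -!big_split; apply: eq_bigr => B1 _.
rewrite -!big_split; apply: eq_bigr => B2 _.
by rewrite -!big_split.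
Qed.

Lemma sum_uniform_choice C :
  \sum_(j : 'I_k) (if j \in C then (#|C|%:R)^-1 else 0) = (C != set0)%:R :> R.
Proof.
rewrite -big_mkcond /= sumr_const.
have [->|hC] := eqVneq C set0; first by rewrite cards0 mulr0n.
by rewrite /= -[LHS]mulr_natr mulVf // pnatr_eq0 cards_eq0.
Qed.

Lemma pdl_ge0 x A j : 0 <= pdl R x A j.
Proof.
rewrite /pdl; case: ifP => _ //; case: ifP => _; [|case: ifP => _].
- apply: sumr_ge0 => B1 _; apply: sumr_ge0 => B2 _; apply: sumr_ge0 => B3 _.
  by rewrite mulr_ge0 ?pdraw3_ge0 //; case: ifP; rewrite ?invr_ge0 ?ler0n.
- apply: sumr_ge0 => B1 _; apply: sumr_ge0 => B2 _; apply: sumr_ge0 => B3 _.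
  by rewrite mulr_ge0 ?pdraw3_ge0 //; case: ifP; rewrite ?ler01.
- apply: sumr_ge0 => B _.
  by rewrite mulr_ge0 ?pdraw_ge0 //; case: ifP; rewrite ?invr_ge0 ?ler0n.
Qed.

End DrawProbabilities.

Section DownloadBounds.
Local Open Scope ring_scope.
Variables (R : realFieldType) (k : nat).
Implicit Types (x : state k) (A B : {set 'I_k}).

Lemma rare3_single B :
  [/\ rare3 set0 set0 B = B, rare3 set0 B set0 = B & rare3 B set0 set0 = B].
Proof.
by split; apply/setP => i; rewrite /rare3 /mult3 !inE /=; case: (i \in B).
Qed.

(* Rule (i): an empty peer downloads at least when exactly one of its three
   draws is non-empty. *)
Lemma pdl_empty_lb x :
  3 * pdraw R x set0 ^+ 2 * (1 - pdraw R x set0) <= \sum_j pdl R x set0 j.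
Proof.
have pdl0 j : pdl R x set0 j = \sum_B1 \sum_B2 \sum_B3 pdraw3 R x B1 B2 B3 *
    (if j \in rare3 B1 B2 B3 then (#|rare3 B1 B2 B3|%:R)^-1 else 0).
  by rewrite /pdl inE cards0 eqxx.
under eq_bigr do rewrite pdl0.
rewrite exchange_big /=.
under eq_bigr do rewrite exchange_big /=.
under eq_bigr do under eq_bigr do rewrite exchange_big /=.
under eq_bigr do under eq_bigr do under eq_bigr do
  rewrite -mulr_sumr sum_uniform_choice.
set e := fun B => pdraw R x B * (B == set0)%:R.
set ne := fun B => pdraw R x B * (B != set0)%:R.
have -> : 3 * pdraw R x set0 ^+ 2 * (1 - pdraw R x set0) =
    \sum_B1 \sum_B2 \sum_B3
      (e B1 * e B2 * ne B3 + e B1 * ne B2 * e B3 + ne B1 * e B2 * e B3).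
  by rewrite sum3D !sum3_factor /e /ne !sum_mul_eq !sum_pdraw_neq; ring.
apply: ler_sum => B1 _; apply: ler_sum => B2 _; apply: ler_sum => B3 _.
rewrite [X in X <= _](_ : _ = pdraw3 R x B1 B2 B3 *
  ((B1 == set0)%:R * (B2 == set0)%:R * (B3 != set0)%:R +
   (B1 == set0)%:R * (B2 != set0)%:R * (B3 == set0)%:R +
   (B1 != set0)%:R * (B2 == set0)%:R * (B3 == set0)%:R)); last first.
  by rewrite /e /ne /pdraw3; ring.
apply: ler_wpM2l; first exact: pdraw3_ge0.
have [->|h1] := eqVneq B1 set0; have [->|h2] := eqVneq B2 set0;
  have [->|h3] := eqVneq B3 set0;
  rewrite ?eqxx ?(negPf h1) ?(negPf h2) ?(negPf h3) /=
          ?mulr0 ?mul0r ?addr0 ?add0r ?mulr1;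
  try by case: (rare3 _ _ _ != set0).
- by case: (rare3_single B3) => -> _ _; rewrite h3.
- by case: (rare3_single B2) => _ -> _; rewrite h2.
- by case: (rare3_single B1) => _ _ ->; rewrite h1.
Qed.

Lemma setC_neq0 A : A != [set: 'I_k] -> ~: A != set0.
Proof. by apply: contraNneq => h; rewrite -(setCK A) h setC0. Qed.

(* Rule (ii): an intermediate peer downloads at least when its draw is the
   seed. *)
Lemma pdl_mid_lb x A : A != [set: 'I_k] -> #|A| != 0%N -> #|A| != k.-1 ->
  pdraw R x [set: 'I_k] <= \sum_j pdl R x A j.
Proof.
move=> hT h0 h1.
have pdlA j : pdl R x A j = \sum_B pdraw R x B *
    (if j \in B :\: A then (#|B :\: A|%:R)^-1 else 0).
  rewrite /pdl (negPf h0) (negPf h1); case: ifP => // hj.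
  by rewrite big1 // => B _; rewrite inE hj /= mulr0.
under eq_bigr do rewrite pdlA.
rewrite exchange_big /=.
under eq_bigr do rewrite -mulr_sumr sum_uniform_choice.
rewrite (bigD1 [set: 'I_k]) //= setTD (setC_neq0 hT) mulr1 lerDl.
by apply: sumr_ge0 => B _; rewrite mulr_ge0 ?pdraw_ge0 ?ler0n.
Qed.

(* Rule (iii): a peer of profile A = [set~ j] gets j at least when two draws
   have profile A and the third holds j. *)
Lemma pdl_oneshort_lb x A j : (1 < k)%N -> #|A| = k.-1 -> j \notin A ->
  3 * pdraw R x A ^+ 2 * (\sum_B pdraw R x B * (j \in B)%:R)
  <= \sum_j' pdl R x A j'.
Proof.
move=> hk hA hj.
apply: le_trans (_ : pdl R x A j <= _); last first.
  by rewrite (bigD1 j) //= lerDl; apply: sumr_ge0 => *; apply: pdl_ge0.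
have hA0 : #|A| != 0%N by rewrite hA; lia.
rewrite /pdl (negPf hj) (negPf hA0) hA eqxx.
set f := fun B => pdraw R x B * (j \in B)%:R.
set g := fun B => pdraw R x B * (B == A)%:R.
have -> : 3 * pdraw R x A ^+ 2 * (\sum_B f B) = \sum_B1 \sum_B2 \sum_B3
    (f B1 * g B2 * g B3 + g B1 * f B2 * g B3 + g B1 * g B2 * f B3).
  by rewrite sum3D !sum3_factor /g !sum_mul_eq; ring.
apply: ler_sum => B1 _; apply: ler_sum => B2 _; apply: ler_sum => B3 _.
rewrite [X in X <= _](_ : _ = pdraw3 R x B1 B2 B3 *
  ((j \in B1)%:R * (B2 == A)%:R * (B3 == A)%:R +
   (B1 == A)%:R * (j \in B2)%:R * (B3 == A)%:R +
   (B1 == A)%:R * (B2 == A)%:R * (j \in B3)%:R)); last first.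
  by rewrite /f /g /pdraw3; ring.
apply: ler_wpM2l; first exact: pdraw3_ge0.
have twice C D E : (C = A /\ D = A) \/ (C = A /\ E = A) \/ (D = A /\ E = A) ->
    [forall i in A, (2 <= mult3 C D E i)%N].
  move=> H; apply/forall_inP => i hi; rewrite /mult3.
  by case: H => [[-> ->]|[[-> ->]|[-> ->]]]; rewrite hi; case: (i \in _).
have [->|h1] := eqVneq B1 A; have [->|h2] := eqVneq B2 A;
  have [->|h3] := eqVneq B3 A;
  rewrite ?eqxx ?(negPf h1) ?(negPf h2) ?(negPf h3) ?(negPf hj) /=
          ?mulr0 ?mul0r ?addr0 ?add0r ?mulr1 ?mul1r;
  try (by case: ifP);
  rewrite twice; try (by auto); rewrite !inE ?(negPf hj) ?orbF /=;
  by case: (j \in _).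
Qed.

End DownloadBounds.

Section TotalDownloadRate.
Local Open Scope ring_scope.
Variables (R : realFieldType) (k : nat).
Hypothesis hk : (1 < k)%N.
Implicit Types (x : state k) (A B : {set 'I_k}).

Definition oneshort : {set {set 'I_k}} := [set B : {set 'I_k} | #|B| == k.-1].
Definition intermediate B : bool :=
  [&& B != set0, B != [set: 'I_k] & #|B| != k.-1].

Definition n_intermediate x : nat := \sum_(B | intermediate B) x B.
Definition n_oneshort_except x A : nat := \sum_(B in oneshort | B != A) x B.

Lemma card_oneshort : #|oneshort| = k.
Proof. by rewrite card_draws card_ord -subn1 bin_sub ?bin1 //; lia. Qed.

Lemma oneshort_setC1 A j : #|A| = k.-1 -> j \notin A -> A = [set~ j].
Proof.
move=> hA hj; apply/eqP; rewrite eqEcard cardsC1 card_ord hA leqnn andbT.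
by apply/subsetP => i hi; rewrite !inE; apply: contraNneq hj => <-.
Qed.

Lemma oneshort_other A B j : #|A| = k.-1 -> j \notin A ->
  #|B| = k.-1 -> B != A -> j \in B.
Proof.
move=> hA hj hB; apply: contraNT => hjB.
by rewrite (oneshort_setC1 hA hj) (oneshort_setC1 hB hjB).
Qed.

Lemma setT_neq0 : [set: 'I_k] != set0.
Proof. by apply/set0Pn; exists (Ordinal (ltnW hk)). Qed.

Lemma setT_notin_oneshort : ([set: 'I_k] \in oneshort) = false.
Proof. by rewrite inE cardsT card_ord; apply/eqP; lia. Qed.

Lemma Stot_classes x : Stot x =
  (1 + x set0 + n_intermediate x + \sum_(B in oneshort) x B)%N.
Proof.
rewrite /Stot (bigD1 [set: 'I_k]) //= {1}/cnt eqxx -!addnA; congr (_ + _)%N.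
rewrite (bigD1 set0) /=; last by rewrite eq_sym setT_neq0.
rewrite /cnt eq_sym (negPf setT_neq0); congr (_ + _)%N.
rewrite (bigID (fun B => #|B| == k.-1)) /= addnC; congr (_ + _)%N.
  apply: eq_big => B.
    rewrite /intermediate; case: (B =P set0) => [->|_]; first by rewrite andbF.
    by case: (B =P [set: 'I_k]) => //= ->; rewrite andbF.
  by move=> /andP [/andP [/negPf ->]].
apply: eq_big => B; last by move=> /andP [/andP [/negPf ->]].
rewrite inE andbC; case: eqP => hB //=.
apply/andP; split; apply/negP => /eqP hB'; move: hB; rewrite hB'.
  by rewrite cardsT card_ord; lia.
by rewrite cards0; lia.
Qed.

Lemma pdraw_holds_lb x A j : A \in oneshort -> j \notin A ->
  (1 + (n_oneshort_except x A)%:R) / (Stot x)%:R <=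
  \sum_B pdraw R x B * (j \in B)%:R.
Proof.
move=> hA hj.
have hAc : #|A| = k.-1 by move: hA; rewrite inE => /eqP.
apply: le_trans (_ : \sum_B pdraw R x B *
   ((B == [set: 'I_k])%:R + ((B \in oneshort) && (B != A))%:R) <= _); last first.
  apply: ler_sum => B _; apply: ler_wpM2l; first exact: pdraw_ge0.
  have [->|hT] := eqVneq B [set: 'I_k].
    by rewrite setT_notin_oneshort inE addr0.
  rewrite /= add0r.
  have [/andP [hB hBA]|_] := boolP ((B \in oneshort) && (B != A)); last first.
    by rewrite ler0n.
  by rewrite (oneshort_other hAc hj) //; move: hB; rewrite inE => /eqP.
under [X in _ <= X]eq_bigr do rewrite mulrDr.
rewrite big_split /= sum_mul_eq mulrDl; apply: lerD.
  by rewrite /pdraw /cnt eqxx.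
rewrite natr_sum mulr_suml big_mkcond /=; apply: ler_sum => B _.
case: ifP => [/andP [hB _]|_]; last by rewrite /= mulr0.
rewrite mulr1 /pdraw /cnt; case: eqP => // hBT.
by move: hB; rewrite hBT setT_notin_oneshort.
Qed.

Lemma download_rate_classes_lb x A : A \in oneshort ->
  (x set0)%:R * (\sum_j pdl R x set0 j) + (x A)%:R * (\sum_j pdl R x A j) +
  (n_intermediate x)%:R * pdraw R x [set: 'I_k]
  <= download_rate R x.
Proof.
move=> hA.
have hAc : #|A| = k.-1 by move: hA; rewrite inE => /eqP.
have hA0 : A != set0 by apply/eqP => h; move: hAc; rewrite h cards0; lia.
set F := fun B => (x B)%:R * \sum_j pdl R x B j.
have F0 B : 0 <= F B.
  by rewrite /F mulr_ge0 ?ler0n // sumr_ge0 // => j _; apply: pdl_ge0.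
rewrite /download_rate (eq_bigr F); last by move=> B _; rewrite /F mulr_sumr.
rewrite [X in _ <= X](bigD1 set0) //= [X in _ <= _ + X](bigD1 A) //=.
rewrite addrA lerD //.
apply: le_trans (_ : \sum_(B | intermediate B) F B <= _).
  rewrite natr_sum mulr_suml; apply: ler_sum => B /and3P [h0 hT h1].
  by rewrite /F ler_wpM2l ?ler0n // pdl_mid_lb // cards_eq0.
rewrite [X in _ <= X](bigID intermediate) /=.
have -> : \sum_(B | (B != set0) && (B != A) && intermediate B) F B =
          \sum_(B | intermediate B) F B.
  apply: eq_bigl => B; case hm: (intermediate B); rewrite ?andbF ?andbT //.
  case/and3P: hm => h0 _ h1; rewrite h0 /=.
  by apply: contraNneq h1 => ->; rewrite hAc.
by rewrite lerDl sumr_ge0.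
Qed.

Lemma download_rate_explicit_lb x A j : A \in oneshort -> j \notin A ->
  (x set0)%:R * (3 * ((x set0)%:R / (Stot x)%:R) ^+ 2 *
                  (1 - (x set0)%:R / (Stot x)%:R)) +
  (n_intermediate x)%:R / (Stot x)%:R +
  (x A)%:R * (3 * ((x A)%:R / (Stot x)%:R) ^+ 2 *
              ((1 + (n_oneshort_except x A)%:R) / (Stot x)%:R))
  <= download_rate R x.
Proof.
move=> hA hj.
set S := (Stot x)%:R; set n0 := (x set0)%:R; set M := (x A)%:R.
have hAc : #|A| = k.-1 by move: hA; rewrite inE => /eqP.
have hAT : A != [set: 'I_k] by apply: contraTneq hA => ->; rewrite setT_notin_oneshort.
have pT : pdraw R x [set: 'I_k] = S^-1 by rewrite /pdraw /cnt eqxx div1r.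
have p0 : pdraw R x set0 = n0 / S by rewrite /pdraw /cnt eq_sym (negPf setT_neq0).
have pA : pdraw R x A = M / S by rewrite /pdraw /cnt (negPf hAT).
apply: le_trans _ (download_rate_classes_lb x hA); rewrite pT addrAC.
apply: lerD; last by [].
apply: lerD; apply: ler_wpM2l; rewrite ?ler0n //.
  by rewrite -p0; apply: pdl_empty_lb.
apply: le_trans (pdl_oneshort_lb R x hk hAc hj); rewrite pA ler_wpM2l //.
  by rewrite mulr_ge0 ?exprn_ge0 ?divr_ge0 ?ler0n.
exact: pdraw_holds_lb.
Qed.

Lemma download_rate_lb x : (3 * k ^ 3 < Stot x)%N -> 9/20 <= download_rate R x.
Proof.
move=> hS.
have [A hA hmax] := @eq_bigmax_cond _ (mem oneshort) (fun B => x B)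
  ltac:(by rewrite card_oneshort //; lia).
have [j hj] : exists j, j \notin A.
  have hAT : A != [set: 'I_k] by apply: contraTneq hA => ->; rewrite setT_notin_oneshort.
  by case/set0Pn: (setC_neq0 hAT) => j; rewrite inE => hj; exists j.
apply: le_trans _ (download_rate_explicit_lb x hA hj).
have hn3 : (\sum_(B in oneshort) x B = x A + n_oneshort_except x A)%N.
  by rewrite (bigD1 A).
apply: (@download_rate_numeric_lb R _ _ _ _ _ k%:R); rewrite ?ler0n //.
- by rewrite ler_nat.
- by move: hS; rewrite -(ler_nat R) -addn1 natrD natrM natrX.
- rewrite -natrD -natrM ler_nat -hn3.
  apply: leq_trans (_ : (\sum_(B in oneshort) x A <= _)%N).
    by apply: leq_sum => B hB; rewrite -hmax; apply: leq_bigmax_cond.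
  by rewrite sum_nat_const card_oneshort // mulnC.
- by rewrite Stot_classes // hn3 !natrD !addrA.
Qed.

End TotalDownloadRate.

Unset Implicit Arguments.
Local Open Scope ring_scope.

Theorem mainTheorem6 (R : realFieldType) (k : nat) (hk : (2 <= k)%N)
  (lam : R) (hlam0 : 0 < lam) (hlam1 : lam <= (3 * k)%:R^-1) :
  exists eps : R, 0 < eps /\
    forall x : state k, x [set: 'I_k] = 0%N ->
      (3 * k ^ 3 < Stot x)%N ->
      drift lam (@L1 k R) x < - eps.
Proof.
exists (1/10); split; first by rewrite divr_gt0 ?ltr01 ?ltr0n.
move=> x _ hS.
have hk0 : (k%:R : R) != 0 by rewrite pnatr_eq0; lia.
have arrivals : lam * k%:R <= 1/3.
  apply: le_trans (_ : (3 * k)%:R^-1 * k%:R <= _); first by rewrite ler_wpM2r.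
  by rewrite natrM invfM -mulrA mulVf // mulr1 div1r.
have downloads := download_rate_lb R hk hS.
rewrite drift_L1; lra.
Qed.
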